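(* For every $\gamma>0$ and every $E>0$ there exists a density operator $\varrho$ with $0<\operatorname{tr}[\varrho H^2]\le E$ such that $$\left\|\widetilde\varrho_{-}-\frac{{\cal N}_{-}(\gamma)[\varrho]}{\operatorname{tr}\big[{\cal N}_{-}(\gamma)[\varrho]\big]}\right\|_1\ \ge\ 1.$$
   Context: ${\cal H}$ is a separable Hilbert space with orthonormal (Fock) basis $\{|n\rangle\}_{n=0}^{\infty}$; $a=\sum_{n\ge1}\sqrt{n}\,|n-1\rangle\langle n|$, $a^{\dagger}=\sum_{n\ge0}\sqrt{n+1}\,|n+1\rangle\langle n|$, $H=a^{\dagger}a$. For a density operator $\varrho$, $\operatorname{tr}[\varrho H^k]=\sum_n n^k\langle n|\varrho|n\rangle$. Ideal photon subtraction output: $\widetilde\varrho_{-}=a\varrho a^{\dagger}/\operatorname{tr}[a\varrho a^{\dagger}]$ (defined when $0<\operatorname{tr}[\varrho H]<\infty$). For $\gamma>0$, the approximate photon subtraction operation is ${\cal N}_{-}(\gamma)[\varrho]=(e^{2\gamma}-1)\,a e^{-\gamma H}\varrho e^{-\gamma H}a^{\dagger}$. $\|X\|_1=\operatorname{tr}\sqrt{X^{\dagger}X}$. *)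

(* classical reals. Operators on the Fock space are represented
   by their (infinite) matrices in the Fock basis {|n>}. *)
From Stdlib Require Import Reals.
Open Scope R_scope.

Record C := mkC { Re : R; Im : R }.
Definition C0 : C := mkC 0 0.
Definition Cadd (z w : C) : C := mkC (Re z + Re w) (Im z + Im w).
Definition Csub (z w : C) : C := mkC (Re z - Re w) (Im z - Im w).
Definition Cmul (z w : C) : C :=
  mkC (Re z * Re w - Im z * Im w) (Re z * Im w + Im z * Re w).
Definition Cconj (z : C) : C := mkC (Re z) (- Im z).
Definition Cscale (r : R) (z : C) : C := mkC (r * Re z) (r * Im z).

Fixpoint CsumN (f : nat -> C) (N : nat) : C :=
  match N with O => C0 | S k => Cadd (CsumN f k) (f k) end.

Definition Cseries (f : nat -> C) (l : C) : Prop :=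
  infinite_sum (fun k => Re (f k)) (Re l) /\ infinite_sum (fun k => Im (f k)) (Im l).

(* Matrix of an operator in the Fock basis: M m n = <m|M|n>. *)
Definition Mat := nat -> nat -> C.

(* Positive semidefinite: <v|M|v> is real and >= 0 for every finitely
   supported vector v (support in {0..N-1}). *)
Definition psd (M : Mat) : Prop :=
  forall (N : nat) (v : nat -> C),
    let q := CsumN (fun i => CsumN (fun j =>
               Cmul (Cconj (v i)) (Cmul (M i j) (v j))) N) N in
    Im q = 0 /\ 0 <= Re q.

Definition is_density (rho : Mat) : Prop :=
  psd rho /\ infinite_sum (fun n => Re (rho n n)) 1.

(* tr[rho H^k] = sum_n n^k <n|rho|n> converges to s. *)
Definition tr_H_pow (rho : Mat) (k : nat) (s : R) : Prop :=
  infinite_sum (fun n => INR n ^ k * Re (rho n n)) s.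

Definition tr_is (M : Mat) (t : R) : Prop :=
  infinite_sum (fun n => Re (M n n)) t.

(* a rho a^dagger :  <m| a rho a^+ |n> = sqrt(m+1) sqrt(n+1) <m+1|rho|n+1>. *)
Definition sub_ideal (rho : Mat) : Mat :=
  fun m n => Cscale (sqrt (INR m + 1) * sqrt (INR n + 1)) (rho (S m) (S n)).

(* N_-(gamma)[rho] = (e^{2 gamma}-1) a e^{-gamma H} rho e^{-gamma H} a^dagger. *)
Definition N_minus (gamma : R) (rho : Mat) : Mat :=
  fun m n => Cscale ((exp (2 * gamma) - 1)
                     * (sqrt (INR m + 1) * exp (- gamma * (INR m + 1)))
                     * (sqrt (INR n + 1) * exp (- gamma * (INR n + 1))))
                    (rho (S m) (S n)).

(* ||X||_1 = tr sqrt(X^dagger X) = t : S is the positive square root of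
   X^dagger X (S psd, S*S = X^dagger X entrywise, both products being
   convergent series), and tr S = t. *)
Definition trace_norm_is (X : Mat) (t : R) : Prop :=
  exists S : Mat,
    psd S /\
    (forall m n, exists z : C,
        Cseries (fun k => Cmul (Cconj (X k m)) (X k n)) z /\
        Cseries (fun k => Cmul (S m k) (S k n)) z) /\
    tr_is S t.

From Pilot Require Import Defs.
From Stdlib Require Import Reals Lra Lia FunctionalExtensionality.
Open Scope R_scope.

(* The witness is a state diagonal in the Fock basis with weight p on |1>,
   weight 3p/(M+1) on |M+1> and the rest on |0>.  For diagonal states both
   a rho a^dagger and N_-(gamma)[rho] are again diagonal: the ideal operation
   shifts the distribution down by one level with weight k+1, the approximate
   one additionally multiplies level k by the attenuation factor
   (e^{2 gamma}-1) e^{-2 gamma (k+1)}.  After normalisation the ideal output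
   puts weights (1/4, 3/4) on levels (0, M), the approximate one (q, 1-q)
   with q >= 3/4 once e^{gamma M} >= 3, so their trace distance 2|q - 1/4|
   is at least 1, while tr[rho H^2] = p (1 + 3(M+1)) can be made <= E by
   taking p small. *)

(* The point mass [pt j c]: the real sequence equal to [c] at index [j] and
   [0] elsewhere.  Every series in the proof is a finite sum of these. *)
Definition pt (j : nat) (c : R) (k : nat) : R := if Nat.eqb k j then c else 0.

Lemma pt_partial (j : nat) (c : R) (n : nat) :
  sum_f_R0 (pt j c) n = if Nat.leb j n then c else 0.
Proof.
  induction n as [|n IH].
  - unfold pt; simpl; destruct j; reflexivity.
  - simpl sum_f_R0; rewrite IH; unfold pt.
    destruct (Nat.leb_spec j n), (Nat.eqb_spec (S n) j), (Nat.leb_spec j (S n));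
      try lia; ring.
Qed.

Lemma pt_sum (j : nat) (c : R) : infinite_sum (pt j c) c.
Proof.
  intros eps Heps; exists j; intros n Hn.
  rewrite pt_partial; destruct (Nat.leb_spec j n); [|lia].
  unfold Rdist; replace (c - c) with 0 by ring; rewrite Rabs_R0; lra.
Qed.

Lemma isum_ext (f g : nat -> R) (l : R) :
  (forall k, f k = g k) -> infinite_sum f l -> infinite_sum g l.
Proof.
  intros Hfg Hf; replace g with f; [exact Hf|].
  apply functional_extensionality; exact Hfg.
Qed.

Lemma isum_plus (f g : nat -> R) (a b : R) :
  infinite_sum f a -> infinite_sum g b -> infinite_sum (fun k => f k + g k) (a + b).
Proof.
  intros Hf Hg eps Heps.
  destruct (CV_plus _ _ _ _ Hf Hg eps Heps) as [N HN].
  exists N; intros n Hn; rewrite plus_sum; exact (HN n Hn).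
Qed.

Definition diag (x : nat -> R) : Mat :=
  fun m n => mkC (if Nat.eqb m n then x m else 0) 0.

Lemma CsumN_nonneg (f : nat -> Defs.C) (N : nat) :
  (forall k, Im (f k) = 0 /\ 0 <= Re (f k)) ->
  Im (CsumN f N) = 0 /\ 0 <= Re (CsumN f N).
Proof.
  intros Hf; induction N as [|N [IHim IHre]]; simpl; [lra|].
  destruct (Hf N); split; lra.
Qed.

(* A diagonal matrix with nonnegative entries is positive semidefinite:
   its quadratic form is the sum of the terms [x i |v i|^2]. *)
Lemma diag_psd (x : nat -> R) : (forall k, 0 <= x k) -> psd (diag x).
Proof.
  intros Hx N v; simpl.
  apply CsumN_nonneg; intros i; apply CsumN_nonneg; intros j; simpl.
  destruct (Nat.eqb_spec i j) as [<-|_].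
  - specialize (Hx i); split; [ring|nra].
  - split; ring_simplify; lra.
Qed.

Lemma diag_trace (x : nat -> R) (l : R) : infinite_sum x l -> tr_is (diag x) l.
Proof.
  apply isum_ext; intros k; unfold diag; simpl; rewrite Nat.eqb_refl; reflexivity.
Qed.

(* For diagonal [X = diag x] and [S = diag y] with [x k ^2 = y k ^2], the
   entries of [X^dagger X] and of [S S] are equal, each being a series with a
   single nonzero term. *)
Lemma diag_square_series (x y : nat -> R) :
  (forall k, x k * x k = y k * y k) ->
  forall m n, exists z : Defs.C,
    Cseries (fun k => Cmul (Cconj (diag x k m)) (diag x k n)) z /\
    Cseries (fun k => Cmul (diag y m k) (diag y k n)) z.
Proof.
  intros Hxy m n.
  set (z := if Nat.eqb m n then y m * y m else 0).
  exists (mkC z 0); split; split; simpl;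
    [apply isum_ext with (pt m z) | apply isum_ext with (pt m 0)
    |apply isum_ext with (pt m z) | apply isum_ext with (pt m 0)];
    try apply pt_sum; intros k; unfold pt, z;
    destruct (Nat.eqb_spec k m), (Nat.eqb_spec m k), (Nat.eqb_spec k n),
      (Nat.eqb_spec m n); subst; try lia; try rewrite Hxy; ring.
Qed.

(* The trace norm of a real diagonal matrix is the sum of the absolute values
   of its entries: the witness square root is [diag |x|]. *)
Lemma diag_trace_norm (x : nat -> R) (t : R) :
  infinite_sum (fun k => Rabs (x k)) t -> trace_norm_is (diag x) t.
Proof.
  intros Ht; exists (diag (fun k => Rabs (x k))); split; [|split].
  - apply diag_psd; intros k; apply Rabs_pos.
  - apply diag_square_series; intros k.
    rewrite <- Rabs_mult, Rabs_right; [reflexivity|].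
    apply Rle_ge; apply Rle_0_sqr.
  - apply diag_trace; exact Ht.
Qed.

(* The diagonal of [a rho a^dagger] for diagonal [rho = diag w]:
   the photon-number distribution shifted down by one, weighted by [k+1]. *)
Definition shifted (w : nat -> R) (k : nat) : R := (INR k + 1) * w (S k).

(* The extra factor by which [N_-(gamma)] damps the [k]-th diagonal entry
   relative to ideal photon subtraction. *)
Definition attenuation (gamma : R) (k : nat) : R :=
  (exp (2 * gamma) - 1) * exp (- gamma * (INR k + 1)) ^ 2.

Lemma sqrt_succ_sq (k : nat) : sqrt (INR k + 1) * sqrt (INR k + 1) = INR k + 1.
Proof. apply sqrt_sqrt; pose proof (pos_INR k); lra. Qed.

Lemma sub_ideal_diag (w : nat -> R) : sub_ideal (diag w) = diag (shifted w).
Proof.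
  apply functional_extensionality; intro m; apply functional_extensionality; intro n.
  unfold sub_ideal, diag, shifted, Cscale; simpl.
  destruct (Nat.eqb_spec m n) as [<-|_]; f_equal; try ring.
  rewrite sqrt_succ_sq; reflexivity.
Qed.

Lemma N_minus_diag (gamma : R) (w : nat -> R) :
  N_minus gamma (diag w) = diag (fun k => attenuation gamma k * shifted w k).
Proof.
  apply functional_extensionality; intro m; apply functional_extensionality; intro n.
  unfold N_minus, diag, shifted, attenuation, Cscale; simpl.
  destruct (Nat.eqb_spec m n) as [<-|_]; f_equal; try ring.
  replace ((INR m + 1) * w (S m))
    with (sqrt (INR m + 1) * sqrt (INR m + 1) * w (S m)) by (rewrite sqrt_succ_sq; ring).
  ring.
Qed.

Lemma diag_sub_scale (a b : R) (x y : nat -> R) :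
  (fun m n => Csub (Cscale a (diag x m n)) (Cscale b (diag y m n)))
  = diag (fun k => a * x k - b * y k).
Proof.
  apply functional_extensionality; intro m; apply functional_extensionality; intro n.
  unfold diag, Csub, Cscale; simpl.
  destruct (Nat.eqb m n); f_equal; ring.
Qed.

Lemma attenuation_ratio (gamma : R) (M : nat) :
  attenuation gamma M = attenuation gamma 0 * exp (- gamma * INR M) ^ 2.
Proof.
  unfold attenuation; simpl INR.
  replace (- gamma * (INR M + 1)) with (- gamma * (0 + 1) + - gamma * INR M) by ring.
  rewrite exp_plus; ring.
Qed.

Lemma attenuation_pos (gamma : R) (k : nat) : 0 < gamma -> 0 < attenuation gamma k.
Proof.
  intros Hg; unfold attenuation.
  assert (1 + 2 * gamma < exp (2 * gamma)) by (apply exp_ineq1; lra).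
  pose proof (exp_pos (- gamma * (INR k + 1))).
  apply Rmult_lt_0_compat; [lra|apply pow_lt; lra].
Qed.

Definition two_point (M : nat) (a b : R) (k : nat) : R := pt 0 a k + pt M b k.

Lemma two_point_sum (M : nat) (a b : R) : infinite_sum (two_point M a b) (a + b).
Proof. apply isum_plus; apply pt_sum. Qed.

Lemma two_point_abs (M : nat) (a b : R) (k : nat) : M <> 0%nat ->
  Rabs (two_point M a b k) = two_point M (Rabs a) (Rabs b) k.
Proof.
  intros HM; unfold two_point, pt.
  destruct (Nat.eqb_spec k 0), (Nat.eqb_spec k M); subst; try lia;
    rewrite ?Rplus_0_l, ?Rplus_0_r, ?Rabs_R0; reflexivity.
Qed.

Lemma two_point_combine (M : nat) (c d : R) (f : nat -> R) (a b : R) (k : nat) :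
  c * two_point M a b k - d * (f k * two_point M a b k)
  = two_point M ((c - d * f 0%nat) * a) ((c - d * f M) * b) k.
Proof.
  unfold two_point, pt.
  destruct (Nat.eqb_spec k 0), (Nat.eqb_spec k M); subst; ring.
Qed.

(* If level [M] is attenuated at least 9 times more strongly than level [0],
   the renormalised weight [q] of level [0] is at least [3/4], so the trace
   distance [2 |q - 1/4|] to the ideal weights [(1/4, 3/4)] is at least 1. *)
Lemma damped_distance (a0 aM : R) : 0 < aM -> 9 * aM <= a0 ->
  1 <= 2 * Rabs (a0 / (a0 + 3 * aM) - 1 / 4).
Proof.
  intros HaM Ha.
  assert (Hq : 3 / 4 <= a0 / (a0 + 3 * aM)).
  { apply (Rmult_le_reg_r (a0 + 3 * aM)); [lra|].
    replace (a0 / (a0 + 3 * aM) * (a0 + 3 * aM)) with a0 by (field; lra); lra. }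
  rewrite Rabs_right; lra.
Qed.

(* Choosing [M] with [exp (gamma M) >= 3] damps level [M] by [1/9]. *)
Lemma deep_level (gamma : R) : 0 < gamma ->
  exists M : nat, M <> 0%nat /\ 9 * attenuation gamma M <= attenuation gamma 0.
Proof.
  intros Hg.
  destruct (INR_unbounded (2 / gamma)) as [M HM].
  assert (HgM : 2 < gamma * INR M).
  { apply (Rmult_lt_compat_l gamma) in HM; [|lra].
    replace (gamma * (2 / gamma)) with 2 in HM by (field; lra); lra. }
  exists M; split.
  - intros ->; simpl in HgM; lra.
  - assert (Hexp : 1 + gamma * INR M < exp (gamma * INR M)) by (apply exp_ineq1; lra).
    assert (Hsmall : exp (- gamma * INR M) * 3 <= 1).
    { replace (- gamma * INR M) with (- (gamma * INR M)) by ring.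
      rewrite exp_Ropp.
      apply (Rmult_le_reg_r (exp (gamma * INR M))); [apply exp_pos|].
      rewrite Rmult_assoc, (Rmult_comm 3), <- Rmult_assoc, Rinv_l;
        [lra|apply Rgt_not_eq, exp_pos]. }
    rewrite attenuation_ratio.
    pose proof (attenuation_pos gamma 0 Hg).
    pose proof (exp_pos (- gamma * INR M)).
    assert (exp (- gamma * INR M) ^ 2 * 9 <= 1) by (simpl; nra).
    nra.
Qed.

Section Witness.

Variables (p : R) (M : nat).
Hypotheses (Hp : 0 < p) (HM : M <> 0%nat).

(* The witness state is diagonal in the Fock basis, with weights [p] on
   [|1>] and [3p/(M+1)] on [|M+1>] and the remaining mass on [|0>]: after
   subtracting a photon the levels [0] and [M] carry weights [p] and [3p]. *)
Definition witness_weights (k : nat) : R :=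
  pt 0 (1 - p - 3 * p / (INR M + 1)) k + pt 1 p k + pt (S M) (3 * p / (INR M + 1)) k.

(* [M >= 1] keeps the occupation [3p/(M+1)] of [|M+1>] below [3p]. *)
Lemma INR_M_ge_1 : 1 <= INR M.
Proof. apply (le_INR 1); lia. Qed.

Lemma witness_shifted (k : nat) : shifted witness_weights k = two_point M p (3 * p) k.
Proof.
  pose proof INR_M_ge_1.
  unfold shifted, witness_weights, two_point, pt.
  destruct (Nat.eqb_spec (S k) 0), (Nat.eqb_spec (S k) 1), (Nat.eqb_spec (S k) (S M)),
    (Nat.eqb_spec k 0), (Nat.eqb_spec k M); subst; try lia; simpl INR;
    try (field; lra); ring.
Qed.

Lemma witness_density :
  p * (1 + 3 * (INR M + 1)) <= 1 -> is_density (diag witness_weights).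
Proof.
  intros Hsmall; pose proof INR_M_ge_1.
  assert (Hr : 3 * p / (INR M + 1) <= 3 * p * (INR M + 1)).
  { apply (Rmult_le_reg_r (INR M + 1)); [lra|].
    replace (3 * p / (INR M + 1) * (INR M + 1)) with (3 * p) by (field; lra); nra. }
  assert (0 < 3 * p / (INR M + 1)) by (apply Rdiv_lt_0_compat; lra).
  split.
  - apply diag_psd; intros k; unfold witness_weights, pt.
    destruct (Nat.eqb k 0), (Nat.eqb k 1), (Nat.eqb k (S M)); lra.
  - apply diag_trace.
    replace 1 with (1 - p - 3 * p / (INR M + 1) + p + 3 * p / (INR M + 1)) by ring.
    apply isum_plus; [apply isum_plus|]; apply pt_sum.
Qed.

Lemma witness_energy : tr_H_pow (diag witness_weights) 2 (p * (1 + 3 * (INR M + 1))).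
Proof.
  pose proof INR_M_ge_1.
  apply isum_ext with (fun k => pt 1 p k + pt (S M) (3 * p * (INR M + 1)) k).
  - intros k; unfold diag, witness_weights, pt; simpl Re; rewrite Nat.eqb_refl.
    destruct (Nat.eqb_spec k 0), (Nat.eqb_spec k 1), (Nat.eqb_spec k (S M)); subst;
      try lia; rewrite ?S_INR; simpl; try (field; lra); ring.
  - replace (p * (1 + 3 * (INR M + 1))) with (p + 3 * p * (INR M + 1)) by ring.
    apply isum_plus; apply pt_sum.
Qed.

Lemma witness_ideal_trace : tr_is (sub_ideal (diag witness_weights)) (4 * p).
Proof.
  rewrite sub_ideal_diag; apply diag_trace.
  apply isum_ext with (two_point M p (3 * p)).
  - intros k; symmetry; apply witness_shifted.
  - replace (4 * p) with (p + 3 * p) by ring; apply two_point_sum.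
Qed.

Variable gamma : R.
Hypothesis Hgamma : 0 < gamma.

Lemma witness_approx_trace :
  tr_is (N_minus gamma (diag witness_weights))
        (p * (attenuation gamma 0 + 3 * attenuation gamma M)).
Proof.
  rewrite N_minus_diag; apply diag_trace.
  apply isum_ext
    with (two_point M (attenuation gamma 0 * p) (attenuation gamma M * (3 * p))).
  - intros k; rewrite witness_shifted; unfold two_point, pt.
    destruct (Nat.eqb_spec k 0), (Nat.eqb_spec k M); subst; ring.
  - replace (p * (attenuation gamma 0 + 3 * attenuation gamma M))
      with (attenuation gamma 0 * p + attenuation gamma M * (3 * p)) by ring.
    apply two_point_sum.
Qed.

(* After normalisation both outputs are diagonal and supported on [{0, M}]:
   the ideal one with weights [(1/4, 3/4)], the approximate one with
   [(q, 1 - q)]; their difference has trace norm [2 |q - 1/4|]. *)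
Lemma witness_trace_distance :
  trace_norm_is
    (fun m n => Csub (Cscale (/ (4 * p)) (sub_ideal (diag witness_weights) m n))
                     (Cscale (/ (p * (attenuation gamma 0 + 3 * attenuation gamma M)))
                             (N_minus gamma (diag witness_weights) m n)))
    (2 * Rabs (attenuation gamma 0 / (attenuation gamma 0 + 3 * attenuation gamma M) - 1 / 4)).
Proof.
  pose proof (attenuation_pos gamma 0 Hgamma); pose proof (attenuation_pos gamma M Hgamma).
  rewrite sub_ideal_diag, N_minus_diag, diag_sub_scale.
  apply diag_trace_norm.
  set (q := attenuation gamma 0 / (attenuation gamma 0 + 3 * attenuation gamma M)).
  apply isum_ext with (two_point M (Rabs (1 / 4 - q)) (Rabs (q - 1 / 4))).
  - intros k.
    rewrite witness_shifted, two_point_combine, two_point_abs by exact HM.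
    unfold q; f_equal; f_equal; field; lra.
  - replace (2 * Rabs (q - 1 / 4)) with (Rabs (1 / 4 - q) + Rabs (q - 1 / 4))
      by (rewrite Rabs_minus_sym; ring).
    apply two_point_sum.
Qed.

End Witness.

Theorem proposition4 :
  forall gamma E : R, 0 < gamma -> 0 < E ->
  exists (rho : Mat) (s tm tn t : R),
    is_density rho /\
    tr_H_pow rho 2 s /\ 0 < s /\ s <= E /\
    tr_is (sub_ideal rho) tm /\ 0 < tm /\
    tr_is (N_minus gamma rho) tn /\ 0 < tn /\
    trace_norm_is
      (fun m n => Csub (Cscale (/ tm) (sub_ideal rho m n))
                       (Cscale (/ tn) (N_minus gamma rho m n))) t /\
    1 <= t.
Proof.
  intros gamma E Hgamma HE.
  destruct (deep_level gamma Hgamma) as [M [HM Hdeep]].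
  pose proof (attenuation_pos gamma 0 Hgamma) as HA0.
  pose proof (attenuation_pos gamma M Hgamma) as HAM.
  (* Spend the energy budget [min E 1] on the photons at levels 1 and M+1. *)
  set (p := Rmin E 1 / (1 + 3 * (INR M + 1))).
  assert (Hbudget : p * (1 + 3 * (INR M + 1)) = Rmin E 1).
  { unfold p; field; pose proof (pos_INR M); lra. }
  assert (Hmin : 0 < Rmin E 1 /\ Rmin E 1 <= E /\ Rmin E 1 <= 1).
  { split; [apply Rmin_pos; lra|split; [apply Rmin_l|apply Rmin_r]]. }
  assert (Hp : 0 < p).
  { unfold p; apply Rdiv_lt_0_compat; pose proof (pos_INR M); lra. }
  exists (diag (witness_weights p M)), (p * (1 + 3 * (INR M + 1))), (4 * p),
    (p * (attenuation gamma 0 + 3 * attenuation gamma M)),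
    (2 * Rabs (attenuation gamma 0 / (attenuation gamma 0 + 3 * attenuation gamma M) - 1 / 4)).
  split; [exact (witness_density p M Hp HM ltac:(lra))|].
  split; [exact (witness_energy p M HM)|].
  split; [lra|]; split; [lra|].
  split; [exact (witness_ideal_trace p M HM)|]; split; [lra|].
  split; [exact (witness_approx_trace p M HM gamma)|]; split; [nra|].
  split; [exact (witness_trace_distance p M Hp HM gamma Hgamma)|].
  exact (damped_distance _ _ HAM Hdeep).
Qed.
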